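(* Let $n=1$ and let $f$ be a Lagrange function of finite order whose Euler–Lagrange expressions $e^1[f],\dots,e^m[f]$ all have order at most $S$ (i.e. depend only on $x$ and $w^j_r$ with $r\le S$). If $S=2K$ is even, then there is a Lagrange function $g$ of order at most $K$ with $e^j[g]=e^j[f]$ for all $j$. If $S=2K+1$ is odd, then there are functions $g_0,g_1,\dots,g_m$ of order at most $K$ such that $e^j[f]=e^j\big[g_0+\sum_{k=1}^m g_k\,w^k_{K+1}\big]$ for all $j$.
   Context: One independent variable $x$, dependent variables $w^1,\dots,w^m$; jet coordinates $w^j_r$ ($r\ge 0$, $w^j_0=w^j$) standing for $d^rw^j/dx^r$. A function ''of order at most $K$'' is a $C^\infty$ function of $x$ and $w^j_r$ with $r\le K$; all functions are defined on the whole corresponding Euclidean space. $\frac{d}{dx}=\partial_x+\sum_{j,r}w^j_{r+1}\partial_{w^j_r}$ and $e^j[f]=\sum_r(-1)^r\frac{d^r}{dx^r}\frac{\partial f}{\partial w^j_r}$. *)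

From Stdlib Require Import Reals Lra List ClassicalEpsilon.
Open Scope R_scope.

(** Points of jet space: x and the jet coordinates w^j_r (pw j r).
    Only indices j < m are meaningful; functions of order <= K ignore the rest. *)
Record Pt := mkPt { px : R ; pw : nat -> nat -> R }.

Inductive Coord := CX | CW (j r : nat).

Definition shift (p : Pt) (c : Coord) (t : R) : Pt :=
  match c with
  | CX => mkPt (px p + t) (pw p)
  | CW j r => mkPt (px p)
      (fun j' r' => if andb (Nat.eqb j' j) (Nat.eqb r' r)
                    then pw p j' r' + t else pw p j' r')
  end.

(** Partial derivative with respect to a coordinate (chosen classically;
    it is the unique derivative whenever it exists). *)
Definition pd (F : Pt -> R) (c : Coord) : Pt -> R := fun p =>
  epsilon (inhabits 0%R)
    (fun l => derivable_pt_lim (fun t => F (shift p c t)) 0 l).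

Definition ipd (F : Pt -> R) (cs : list Coord) : Pt -> R :=
  fold_right (fun c G => pd G c) F cs.

Definition local (m K : nat) (F : Pt -> R) : Prop :=
  forall p q, px p = px q ->
    (forall j r, (j < m)%nat -> (r <= K)%nat -> pw p j r = pw q j r) ->
    F p = F q.

Definition contK (m K : nat) (G : Pt -> R) : Prop :=
  forall p eps, 0 < eps -> exists delta, 0 < delta /\
    forall q, Rabs (px q - px p) < delta ->
      (forall j r, (j < m)%nat -> (r <= K)%nat -> Rabs (pw q j r - pw p j r) < delta) ->
      Rabs (G q - G p) < eps.

Definition smoothK (m K : nat) (F : Pt -> R) : Prop :=
  forall cs : list Coord,
    (forall c p, exists l, derivable_pt_lim (fun t => ipd F cs (shift p c t)) 0 l)
    /\ contK m K (ipd F cs).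

Definition OrderLE (m K : nat) (F : Pt -> R) : Prop := local m K F /\ smoothK m K F.

Definition FiniteOrder (m : nat) (F : Pt -> R) : Prop := exists K, OrderLE m K F.

(** A bound on the order (any valid one, for finite-order F). *)
Definition ordOf (m : nat) (F : Pt -> R) : nat :=
  epsilon (inhabits 0%nat) (fun K => OrderLE m K F).

Fixpoint sumR (n : nat) (f : nat -> R) : R :=
  match n with O => 0 | S n' => sumR n' f + f n' end.

(** Total derivative d/dx = ∂_x + Σ_{j<m} Σ_r w^j_{r+1} ∂_{w^j_r};
    for F of finite order only r <= order contribute, so truncating at
    ordOf m F gives exactly the (finite) formal sum. *)
Definition Dx (m : nat) (F : Pt -> R) : Pt -> R := fun p =>
  pd F CX p + sumR m (fun j => sumR (S (ordOf m F))
                        (fun r => pw p j (S r) * pd F (CW j r) p)).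

Definition euler (m j : nat) (F : Pt -> R) : Pt -> R := fun p =>
  sumR (S (ordOf m F))
    (fun r => (-1) ^ r * Nat.iter r (Dx m) (pd F (CW j r)) p).

(* Let f have order N + 1 while every e^j[f] has order at most
   2T with T <= N. The only term of e^j[f] reaching the jet variables of order 2N + 2 is
   (-1)^(N+1) d^2 f / dw^j_(N+1) dw^k_(N+1) times w^k_(2N+2), so these second derivatives
   vanish and b_k := df/dw^k_(N+1) has order N. The coefficient of w^k_(2N+1) is then
   +-(db_j/dw^k_N - db_k/dw^j_N), so the b_k form a closed family in the variables w_N and
   the Poincare lemma (integration along coordinate lines) gives B of order N with
   dB/dw^k_N = b_k. Since d(D_x B)/dw^k_(N+1) = dB/dw^k_N and e^j[D_x B] = 0, the
   Lagrangian f - D_x B has order N and the same Euler-Lagrange expressions. For S = 2K this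
   reaches order K; for S = 2K + 1 it reaches order K + 1, and the first vanishing shows
   that f is then affine in the w^k_(K+1) with coefficients of order K. *)

From Stdlib Require Import Reals Lra Lia List ClassicalEpsilon FunctionalExtensionality Classical.
From Coquelicot Require Import Coquelicot.
Open Scope R_scope.

(** * Partial derivatives along coordinate lines *)

Lemma Pt_ext p q : px p = px q -> (forall j r, pw p j r = pw q j r) -> p = q.
Proof.
  destruct p, q; simpl; intros -> H; f_equal.
  extensionality j; extensionality r; auto.
Qed.

Ltac destruct_ifs :=
  repeat match goal with |- context [if ?b then _ else _] => destruct b end.

Lemma shift0 p c : shift p c 0 = p.
Proof. destruct c; apply Pt_ext; simpl; intros; destruct_ifs; lra. Qed.

Lemma shift_shift p c u v : shift (shift p c u) c v = shift p c (u + v).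
Proof. destruct c; apply Pt_ext; simpl; intros; destruct_ifs; lra. Qed.

Lemma shiftC p c d u v : shift (shift p c u) d v = shift (shift p d v) c u.
Proof. destruct c, d; apply Pt_ext; simpl; intros; destruct_ifs; lra. Qed.

Definition ex_pd (F : Pt -> R) : Prop :=
  forall c p, ex_derive (fun t => F (shift p c t)) 0.

Lemma pd_unique F c p l : is_derive (fun t => F (shift p c t)) 0 l -> pd F c p = l.
Proof.
  intro H. apply is_derive_Reals in H. unfold pd.
  pose proof (epsilon_spec (inhabits 0%R)
    (fun l => derivable_pt_lim (fun t => F (shift p c t)) 0 l) (ex_intro _ l H)) as H'.
  eapply uniqueness_limite; eassumption.
Qed.

Lemma pd_correct F c p :
  ex_derive (fun t => F (shift p c t)) 0 -> is_derive (fun t => F (shift p c t)) 0 (pd F c p).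
Proof.
  intro H. rewrite (pd_unique F c p (Derive (fun t => F (shift p c t)) 0)); now apply Derive_correct.
Qed.

Lemma is_derive_shift F c p u :
  ex_pd F -> is_derive (fun t => F (shift p c t)) u (pd F c (shift p c u)).
Proof.
  intro HF. pose proof (pd_correct F c (shift p c u) (HF c _)) as H.
  apply (is_derive_ext (fun t => F (shift (shift p c u) c (t - u)))).
  { intro t. rewrite shift_shift. do 2 f_equal. ring. }
  replace (pd F c (shift p c u)) with (scal 1 (pd F c (shift p c u))) by (compute; ring).
  apply (is_derive_comp (fun s => F (shift (shift p c u) c s)) (fun t => t - u)).
  - now rewrite Rminus_diag.
  - auto_derive; auto; ring.
Qed.

Lemma Derive_shift F c p u :
  ex_pd F -> Derive (fun t => F (shift p c t)) u = pd F c (shift p c u).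
Proof. intro HF. now apply is_derive_unique, is_derive_shift. Qed.

Lemma pd_eq0 F c p : (forall t, F (shift p c t) = F p) -> pd F c p = 0.
Proof.
  intro H. apply pd_unique, (is_derive_ext (fun _ => F p)); [intro; now rewrite H|].
  apply (is_derive_const (F p)).
Qed.

Lemma pd_plus F G c p :
  ex_derive (fun t => F (shift p c t)) 0 -> ex_derive (fun t => G (shift p c t)) 0 ->
  pd (fun q => F q + G q) c p = pd F c p + pd G c p.
Proof.
  intros HF HG. apply pd_unique.
  apply (is_derive_plus (fun t => F (shift p c t)) (fun t => G (shift p c t)));
    now apply pd_correct.
Qed.

Lemma pd_mult F G c p :
  ex_derive (fun t => F (shift p c t)) 0 -> ex_derive (fun t => G (shift p c t)) 0 ->
  pd (fun q => F q * G q) c p = pd F c p * G p + F p * pd G c p.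
Proof.
  intros HF HG. apply pd_unique.
  pose proof (is_derive_mult (fun t => F (shift p c t)) (fun t => G (shift p c t)) 0 _ _
    (pd_correct _ _ _ HF) (pd_correct _ _ _ HG) Rmult_comm) as H.
  simpl in H. now rewrite shift0 in H.
Qed.

Lemma pd_scal F a c p :
  ex_derive (fun t => F (shift p c t)) 0 -> pd (fun q => a * F q) c p = a * pd F c p.
Proof.
  intro HF. apply pd_unique, (is_derive_scal (fun t => F (shift p c t))). now apply pd_correct.
Qed.

Lemma shift_const_of_pd0 F c p :
  ex_pd F -> (forall u, pd F c (shift p c u) = 0) -> forall t, F (shift p c t) = F p.
Proof.
  intros HF H0.
  assert (E : forall a b, a < b -> F (shift p c a) = F (shift p c b)).
  { intros a b Hab. apply (eq_is_derive (fun t => F (shift p c t))); auto.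
    intros s _. pose proof (is_derive_shift F c p s HF) as Hs. now rewrite H0 in Hs. }
  intro t. destruct (Rtotal_order t 0) as [h|[->|h]].
  - now rewrite (E t 0 h), shift0.
  - now rewrite shift0.
  - now rewrite <- (E 0 t h), shift0.
Qed.

Section Order.
Variable m : nat.

Lemma shift_agree K p q c t :
  px p = px q -> (forall j r, (j < m)%nat -> (r <= K)%nat -> pw p j r = pw q j r) ->
  px (shift p c t) = px (shift q c t) /\
  (forall j r, (j < m)%nat -> (r <= K)%nat -> pw (shift p c t) j r = pw (shift q c t) j r).
Proof.
  intros Hx Hw. destruct c; simpl; split; intros; try rewrite Hx; auto.
  destruct_ifs; rewrite Hw; auto.
Qed.

Lemma local_pd K F c : local m K F -> local m K (pd F c).
Proof.
  intros HF p q Hx Hw. unfold pd.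
  replace (fun t => F (shift p c t)) with (fun t => F (shift q c t)); auto.
  extensionality t. destruct (shift_agree K p q c t Hx Hw). symmetry; auto.
Qed.

Lemma local_ipd K F cs : local m K F -> local m K (ipd F cs).
Proof. intro H; induction cs; simpl; auto using local_pd. Qed.

Lemma local_mono K K' F : (K <= K')%nat -> local m K F -> local m K' F.
Proof. intros HK H p q Hx Hw; apply H; auto. intros; apply Hw; auto; lia. Qed.

Lemma contK_mono K K' G : (K <= K')%nat -> contK m K G -> contK m K' G.
Proof.
  intros HK H p e He. destruct (H p e He) as [d [Hd H']]. exists d; split; auto.
  intros q Hx Hw. apply H'; auto. intros; apply Hw; auto; lia.
Qed.

(* Move q back onto p in the coordinates above K, on which G does not depend. *)
Lemma contK_lower K K' G : local m K G -> contK m K' G -> contK m K G.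
Proof.
  intros HL H p e He. destruct (H p e He) as [d [Hd H']]. exists d; split; auto.
  intros q Hx Hw.
  set (q' := mkPt (px q) (fun j r => if Nat.leb r K then pw q j r else pw p j r)).
  replace (G q) with (G q').
  - apply H'; simpl; auto. intros j r Hj Hr. destruct (Nat.leb r K) eqn:E.
    + apply Nat.leb_le in E; auto.
    + now rewrite Rminus_diag, Rabs_R0.
  - apply HL; simpl; auto. intros j r Hj Hr.
    now replace (Nat.leb r K) with true by (symmetry; apply Nat.leb_le; auto).
Qed.

Lemma OrderLE_mono K K' F : (K <= K')%nat -> OrderLE m K F -> OrderLE m K' F.
Proof.
  intros HK [HL HS]. split; [now apply (local_mono K)|].
  intro cs. destruct (HS cs). split; auto. now apply (contK_mono K).
Qed.

Lemma OrderLE_lower K K' F : local m K F -> OrderLE m K' F -> OrderLE m K F.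
Proof.
  intros HL [_ HS]. split; auto. intro cs. destruct (HS cs). split; auto.
  apply (contK_lower K K'); auto. now apply local_ipd.
Qed.

Lemma OrderLE_ex_pd K F : OrderLE m K F -> ex_pd F.
Proof.
  intros [_ HS] c p. destruct (proj1 (HS nil) c p) as [l Hl].
  exists l. now apply is_derive_Reals.
Qed.

Lemma OrderLE_contK K F : OrderLE m K F -> contK m K F.
Proof. intros [_ HS]. apply (HS nil). Qed.

Lemma OrderLE_pd K F c : OrderLE m K F -> OrderLE m K (pd F c).
Proof.
  intros [HL HS]. split; [now apply local_pd|].
  intro cs. replace (ipd (pd F c) cs) with (ipd F (cs ++ c :: nil)); [apply HS|].
  unfold ipd. now rewrite fold_right_app.
Qed.

Lemma pd_out K G j r p : local m K G -> (m <= j \/ K < r)%nat -> pd G (CW j r) p = 0.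
Proof.
  intros HL Hjr. apply pd_eq0. intro t. apply HL; simpl; auto.
  intros j' r' Hj Hr. destruct (Nat.eqb j' j && Nat.eqb r' r)%bool eqn:E; auto.
  apply andb_prop in E as [E1 E2]. apply Nat.eqb_eq in E1, E2; subst; lia.
Qed.

Lemma pd_out_fun K G j r : local m K G -> (K < r)%nat -> pd G (CW j r) = (fun _ => 0).
Proof. intros; extensionality p; apply (pd_out K); auto. Qed.

End Order.

Lemma frac_bound x e : 0 <= x -> 0 < e -> x * (e / (2 * (x + 1))) < e / 2.
Proof.
  intros Hx He.
  replace (x * (e / (2 * (x + 1)))) with (e / 2 * (x / (x + 1))) by (field; lra).
  assert (x / (x + 1) < 1) by (apply (Rmult_lt_reg_r (x + 1)); [lra|]; field_simplify; lra).
  nra.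
Qed.

Lemma lt_frac_bound y x e : 0 <= x -> y < e / (2 * (x + 1)) -> y * (x + 1) < e / 2.
Proof.
  intros Hx Hy. apply (Rmult_lt_compat_r (x + 1)) in Hy; [|lra].
  now replace (e / (2 * (x + 1)) * (x + 1)) with (e / 2) in Hy by (field; lra).
Qed.

Lemma Rabs_mult_sub_lt a a0 b b0 e : 0 < e ->
  Rabs (a - a0) < e / (2 * (Rabs b0 + 1)) ->
  Rabs (b - b0) < Rmin 1 (e / (2 * (Rabs a0 + 1))) -> Rabs (a * b - a0 * b0) < e.
Proof.
  intros He Ha Hb.
  assert (Hb0 := Rabs_pos b0). assert (Ha0 := Rabs_pos a0).
  assert (Hb1 := Rlt_le_trans _ _ _ Hb (Rmin_l _ _)).
  assert (Hb2 := Rlt_le_trans _ _ _ Hb (Rmin_r _ _)).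
  assert (Hbb : Rabs b <= Rabs b0 + 1).
  { replace b with ((b - b0) + b0) by ring. eapply Rle_trans; [apply Rabs_triang|lra]. }
  replace (a * b - a0 * b0) with ((a - a0) * b + a0 * (b - b0)) by ring.
  eapply Rle_lt_trans; [apply Rabs_triang|]. rewrite !Rabs_mult.
  assert (E1 : Rabs (a - a0) * Rabs b < e / 2).
  { eapply Rle_lt_trans; [|exact (lt_frac_bound _ _ _ Hb0 Ha)].
    apply Rmult_le_compat_l; auto. apply Rabs_pos. }
  assert (E2 : Rabs a0 * Rabs (b - b0) < e / 2).
  { eapply Rle_lt_trans; [|exact (frac_bound _ _ Ha0 He)].
    apply Rmult_le_compat_l; lra. }
  lra.
Qed.

Section Algebra.
Variables m K : nat.

Lemma contK_const a : contK m K (fun _ => a).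
Proof. intros p e He. exists 1; split; [lra|]. intros. now rewrite Rminus_diag, Rabs_R0. Qed.

Lemma contK_px : contK m K px.
Proof. intros p e He. exists e; split; auto. Qed.

Lemma contK_pw j r : (j < m)%nat -> (r <= K)%nat -> contK m K (fun p => pw p j r).
Proof. intros Hj Hr p e He. exists e; split; auto. Qed.

Lemma contK_plus F G : contK m K F -> contK m K G -> contK m K (fun p => F p + G p).
Proof.
  intros HF HG p e He.
  destruct (HF p (e / 2)) as [d1 [Hd1 H1]]; [lra|].
  destruct (HG p (e / 2)) as [d2 [Hd2 H2]]; [lra|].
  exists (Rmin d1 d2); split; [now apply Rmin_pos|].
  intros q Hx Hw.
  assert (A1 : Rabs (F q - F p) < e / 2).
  { apply H1; [|intros; eapply Rlt_le_trans; [apply Hw; auto|]];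
      eauto using Rlt_le_trans, Rmin_l. }
  assert (A2 : Rabs (G q - G p) < e / 2).
  { apply H2; [|intros; eapply Rlt_le_trans; [apply Hw; auto|]];
      eauto using Rlt_le_trans, Rmin_r. }
  replace (F q + G q - (F p + G p)) with ((F q - F p) + (G q - G p)) by ring.
  eapply Rle_lt_trans; [apply Rabs_triang|lra].
Qed.

Lemma contK_mult F G : contK m K F -> contK m K G -> contK m K (fun p => F p * G p).
Proof.
  intros HF HG p e He.
  assert (HFp := Rabs_pos (F p)). assert (HGp := Rabs_pos (G p)).
  destruct (HF p (e / (2 * (Rabs (G p) + 1)))) as [d1 [Hd1 H1]].
  { apply Rdiv_lt_0_compat; lra. }
  destruct (HG p (Rmin 1 (e / (2 * (Rabs (F p) + 1))))) as [d2 [Hd2 H2]].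
  { apply Rmin_pos; [lra|]. apply Rdiv_lt_0_compat; lra. }
  exists (Rmin d1 d2); split; [now apply Rmin_pos|].
  intros q Hx Hw. apply Rabs_mult_sub_lt; auto.
  - apply H1; [|intros; eapply Rlt_le_trans; [apply Hw; auto|]];
      eauto using Rlt_le_trans, Rmin_l.
  - apply H2; [|intros; eapply Rlt_le_trans; [apply Hw; auto|]];
      eauto using Rlt_le_trans, Rmin_r.
Qed.

Lemma ex_pd_const a : ex_pd (fun _ => a).
Proof. intros c p. auto_derive; auto. Qed.

Lemma ex_pd_px : ex_pd px.
Proof. intros c p. destruct c; simpl; auto_derive; auto. Qed.

Lemma ex_pd_pw j r : ex_pd (fun p => pw p j r).
Proof. intros c p. destruct c; simpl; [|destruct_ifs]; auto_derive; auto. Qed.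

Lemma ex_pd_plus F G : ex_pd F -> ex_pd G -> ex_pd (fun p => F p + G p).
Proof.
  intros HF HG c p.
  apply (ex_derive_plus (fun t => F (shift p c t)) (fun t => G (shift p c t))); auto.
Qed.

Lemma ex_pd_mult F G : ex_pd F -> ex_pd G -> ex_pd (fun p => F p * G p).
Proof.
  intros HF HG c p.
  apply (ex_derive_mult (fun t => F (shift p c t)) (fun t => G (shift p c t))); auto.
Qed.

Lemma pd_px_const c : exists a, pd px c = (fun _ => a).
Proof.
  destruct c; [exists 1|exists 0]; extensionality p.
  - apply pd_unique. simpl. auto_derive; auto.
  - now apply pd_eq0.
Qed.

Lemma pd_pw j r j' r' p :
  pd (fun q => pw q j r) (CW j' r') p = if (Nat.eqb j j' && Nat.eqb r r')%bool then 1 else 0.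
Proof.
  destruct (Nat.eqb j j' && Nat.eqb r r')%bool eqn:E.
  - apply pd_unique. simpl. rewrite E. auto_derive; auto.
  - apply pd_eq0. intros; simpl; now rewrite E.
Qed.

Lemma pd_pw_const j r c : exists a, pd (fun p => pw p j r) c = (fun _ => a).
Proof.
  destruct c as [|j' r'].
  - exists 0. extensionality p. now apply pd_eq0.
  - eexists. extensionality p. apply pd_pw.
Qed.

Lemma local_const a : local m K (fun _ => a).
Proof. now intros p q _ _. Qed.

Lemma local_px : local m K px.
Proof. now intros p q H _. Qed.

Lemma local_pw j r : (j < m)%nat -> (r <= K)%nat -> local m K (fun p => pw p j r).
Proof. intros Hj Hr p q _ H; auto. Qed.

Lemma local_plus F G : local m K F -> local m K G -> local m K (fun p => F p + G p).
Proof. intros HF HG p q H1 H2. now rewrite (HF p q), (HG p q). Qed.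

Lemma local_mult F G : local m K F -> local m K G -> local m K (fun p => F p * G p).
Proof. intros HF HG p q H1 H2. now rewrite (HF p q), (HG p q). Qed.

End Algebra.

Definition setw (p : Pt) j r s : Pt :=
  mkPt (px p) (fun j' r' => if (Nat.eqb j' j && Nat.eqb r' r)%bool then s else pw p j' r').

Definition antider j r (F : Pt -> R) : Pt -> R :=
  fun p => RInt (fun s => F (setw p j r s)) 0 (pw p j r).

Lemma setw_pw p j r : setw p j r (pw p j r) = p.
Proof.
  apply Pt_ext; simpl; auto. intros j' r'.
  destruct (Nat.eqb j' j) eqn:E1, (Nat.eqb r' r) eqn:E2; simpl; auto.
  apply Nat.eqb_eq in E1, E2; now subst.
Qed.

Lemma setw_shift p j r t s : setw (shift p (CW j r) t) j r s = setw p j r s.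
Proof. apply Pt_ext; simpl; auto. intros; now destruct_ifs. Qed.

Lemma pw_shift_other p c j r t : c <> CW j r -> pw (shift p c t) j r = pw p j r.
Proof.
  intro H. destruct c as [|j' r']; simpl; auto.
  destruct (Nat.eqb j j') eqn:E1, (Nat.eqb r r') eqn:E2; simpl; auto.
  apply Nat.eqb_eq in E1, E2; subst; tauto.
Qed.

Lemma setw_shift_other p c j r t s :
  c <> CW j r -> setw (shift p c t) j r s = shift (setw p j r s) c t.
Proof.
  intro H. destruct c as [|j' r']; apply Pt_ext; simpl; auto. intros a b.
  destruct (Nat.eqb a j) eqn:E1, (Nat.eqb b r) eqn:E2, (Nat.eqb a j') eqn:E3,
    (Nat.eqb b r') eqn:E4; simpl; auto.
  apply Nat.eqb_eq in E1, E2, E3, E4; subst; tauto.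
Qed.

Lemma antider_eq0 j r F p : (forall q, F q = 0) -> antider j r F p = 0.
Proof.
  intro H. unfold antider. rewrite (RInt_ext _ (fun _ => 0)) by (intros; apply H).
  rewrite RInt_const. compute; ring.
Qed.

Lemma continuous_of_eps (f : R -> R) x :
  (forall e, 0 < e -> exists d, 0 < d /\ forall y, Rabs (y - x) < d -> Rabs (f y - f x) < e) ->
  continuous f x.
Proof.
  intro H. apply continuity_pt_filterlim, continuity_pt_locally. intros [e He].
  destruct (H e He) as [d [Hd H']]. now exists (mkposreal d Hd).
Qed.

Section Antiderivative.
Variables m K j r : nat.
Hypothesis Hj : (j < m)%nat.
Hypothesis Hr : (r <= K)%nat.

Lemma setw_close d p q s t :
  Rabs (px q - px p) < d ->
  (forall j' r', (j' < m)%nat -> (r' <= K)%nat -> Rabs (pw q j' r' - pw p j' r') < d) ->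
  Rabs (s - t) < d ->
  Rabs (px (setw q j r s) - px (setw p j r t)) < d /\
  (forall j' r', (j' < m)%nat -> (r' <= K)%nat ->
     Rabs (pw (setw q j r s) j' r' - pw (setw p j r t) j' r') < d).
Proof. intros H1 H2 H3. split; simpl; auto. intros; destruct_ifs; auto. Qed.

Lemma continuous_setw G q s0 : contK m K G -> continuous (fun s => G (setw q j r s)) s0.
Proof.
  intro HG. apply continuous_of_eps. intros e He.
  destruct (HG (setw q j r s0) e He) as [d [Hd H]]. exists d; split; auto.
  intros y Hy. destruct (setw_close d q q y s0); auto.
  - now rewrite Rminus_diag, Rabs_R0.
  - intros; now rewrite Rminus_diag, Rabs_R0.
Qed.

Lemma ex_RInt_setw G q a b : contK m K G -> ex_RInt (fun s => G (setw q j r s)) a b.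
Proof.
  intro HG. apply (@ex_RInt_continuous R_CompleteNormedModule).
  intros; now apply continuous_setw.
Qed.

Lemma local_antider F : local m K F -> local m K (antider j r F).
Proof.
  intros HF p q Hx Hw. unfold antider. rewrite (Hw j r) by auto.
  apply RInt_ext. intros s _. apply HF; simpl; auto. intros; destruct_ifs; auto.
Qed.

Lemma is_derive_antider F p :
  contK m K F -> is_derive (fun t => antider j r F (shift p (CW j r) t)) 0 (F p).
Proof.
  intro HF. unfold antider.
  apply (is_derive_ext (fun t => RInt (fun s => F (setw p j r s)) 0 (pw p j r + t))).
  { intro t. replace (pw (shift p (CW j r) t) j r) with (pw p j r + t)
      by (simpl; now rewrite !Nat.eqb_refl).
    apply RInt_ext; intros; now rewrite setw_shift. }
  assert (H1 : is_derive (fun b => RInt (fun s => F (setw p j r s)) 0 b) (pw p j r + 0) (F p)).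
  { rewrite Rplus_0_r. rewrite <- (setw_pw p j r) at 2.
    apply (is_derive_RInt (fun s => F (setw p j r s)) _ 0).
    - apply filter_forall. intro b.
      apply (@RInt_correct R_CompleteNormedModule), ex_RInt_setw; auto.
    - now apply continuous_setw. }
  replace (F p) with (scal 1 (F p)) by (compute; ring).
  apply (is_derive_comp _ (fun t => pw p j r + t) 0 _ _ H1). auto_derive; auto.
Qed.

Lemma is_derive_antider_other F p c :
  c <> CW j r -> ex_pd F -> contK m K (pd F c) -> contK m K F ->
  is_derive (fun t => antider j r F (shift p c t)) 0 (antider j r (pd F c) p).
Proof.
  intros Hc HD HdF HF. unfold antider.
  apply (is_derive_ext (fun u => RInt (fun t => F (shift (setw p j r t) c u)) 0 (pw p j r))).
  { intro u. rewrite pw_shift_other by auto.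
    apply RInt_ext. intros; now rewrite setw_shift_other. }
  replace (RInt (fun s => pd F c (setw p j r s)) 0 (pw p j r)) with
    (RInt (fun t => Derive (fun u => F (shift (setw p j r t) c u)) 0) 0 (pw p j r))
    by (apply RInt_ext; intros; now rewrite Derive_shift, shift0).
  apply (is_derive_RInt_param (fun u t => F (shift (setw p j r t) c u))).
  - apply filter_forall. intros x t _. eexists. now apply is_derive_shift.
  - intros t _ [e He]. destruct (HdF (setw p j r t) e He) as [d [Hd H]].
    exists (mkposreal d Hd). intros u v Hu Hv. simpl in Hu, Hv.
    rewrite !Derive_shift, shift0, <- setw_shift_other by auto.
    destruct (setw_close d p (shift p c u) v t) as [A1 A2]; auto.
    + destruct c; simpl; [now replace (px p + u - px p) with (u - 0) by ring|].
      now rewrite Rminus_diag, Rabs_R0.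
    + intros j' r' _ _. destruct c as [|a b]; simpl; [now rewrite Rminus_diag, Rabs_R0|].
      destruct_ifs; [now replace (pw p j' r' + u - pw p j' r') with (u - 0) by ring|].
      now rewrite Rminus_diag, Rabs_R0.
  - apply filter_forall. intro x.
    apply (ex_RInt_ext (fun s => F (setw (shift p c x) j r s))).
    { intros; now rewrite setw_shift_other. }
    now apply ex_RInt_setw.
Qed.

Lemma setw_uniform F p a b e : contK m K F -> 0 < e ->
  exists d, 0 < d /\ forall q s, Rabs (px q - px p) < d ->
    (forall j' r', (j' < m)%nat -> (r' <= K)%nat -> Rabs (pw q j' r' - pw p j' r') < d) ->
    a <= s <= b -> Rabs (F (setw q j r s) - F (setw p j r s)) < e.
Proof.
  intros HF He.
  assert (G : forall t, exists d : posreal, forall q s, Rabs (px q - px p) < d ->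
     (forall j' r', (j' < m)%nat -> (r' <= K)%nat -> Rabs (pw q j' r' - pw p j' r') < d) ->
     Rabs (s - t) < d -> Rabs (F (setw q j r s) - F (setw p j r t)) < e / 2).
  { intro t. destruct (HF (setw p j r t) (e / 2)) as [d [Hd H]]; [lra|].
    exists (mkposreal d Hd). intros q s H1 H2 H3.
    destruct (setw_close d p q s t H1 H2 H3). now apply H. }
  pose (delta t := proj1_sig (constructive_indefinite_description _ (G t))).
  assert (Hdelta : forall t q s, Rabs (px q - px p) < delta t ->
     (forall j' r', (j' < m)%nat -> (r' <= K)%nat -> Rabs (pw q j' r' - pw p j' r') < delta t) ->
     Rabs (s - t) < delta t -> Rabs (F (setw q j r s) - F (setw p j r t)) < e / 2).
  { intro t. exact (proj2_sig (constructive_indefinite_description _ (G t))). }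
  destruct (compactness_value_1d a b delta) as [d Hd].
  exists d; split; [apply cond_pos|].
  intros q s Hx Hw Hs. apply NNPP; intro Hn. apply (Hd s Hs). intros [t [Ht [Hst Hdt]]].
  apply Hn.
  assert (A : Rabs (F (setw q j r s) - F (setw p j r t)) < e / 2).
  { apply Hdelta; try lra. intros j' r' Hj' Hr'. specialize (Hw j' r' Hj' Hr'); lra. }
  assert (B : Rabs (F (setw p j r s) - F (setw p j r t)) < e / 2).
  { apply Hdelta; auto; [|intros]; rewrite Rminus_diag, Rabs_R0; apply cond_pos. }
  replace (F (setw q j r s) - F (setw p j r s))
    with ((F (setw q j r s) - F (setw p j r t)) - (F (setw p j r s) - F (setw p j r t))) by ring.
  eapply Rle_lt_trans; [apply Rabs_triang|]. rewrite Rabs_Ropp. lra.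
Qed.

Lemma RInt_setw_tail_bound F p q d : contK m K F ->
  (forall q', Rabs (px q' - px p) < d ->
     (forall j' r', (j' < m)%nat -> (r' <= K)%nat -> Rabs (pw q' j' r' - pw p j' r') < d) ->
     Rabs (F q' - F p) < 1) ->
  Rabs (px q - px p) < d ->
  (forall j' r', (j' < m)%nat -> (r' <= K)%nat -> Rabs (pw q j' r' - pw p j' r') < d) ->
  Rabs (RInt (fun s => F (setw q j r s)) (pw p j r) (pw q j r))
  <= Rabs (pw q j r - pw p j r) * (Rabs (F p) + 1).
Proof.
  intros HF H0 Hx Hw.
  apply (norm_RInt_le_const_abs (V := R_NormedModule) (fun s => F (setw q j r s))).
  2: apply (@RInt_correct R_CompleteNormedModule), ex_RInt_setw; auto.
  intros t Ht.
  assert (Htb : Rabs (t - pw p j r) < d).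
  { assert (Hqp := Hw j r Hj Hr).
    unfold Rmin, Rmax in Ht. destruct (Rle_dec (pw p j r) (pw q j r));
      unfold Rabs in *; repeat destruct Rcase_abs; lra. }
  destruct (setw_close d p q t (pw p j r)) as [A1 A2]; auto.
  rewrite setw_pw in A1, A2. specialize (H0 _ A1 A2).
  change (norm ?x) with (Rabs x).
  replace (F (setw q j r t)) with ((F (setw q j r t) - F p) + F p) by ring.
  eapply Rle_trans; [apply Rabs_triang|lra].
Qed.

(* Split the integral at the old endpoint b = w^j_r(p): the first piece varies little
   by uniform continuity, the second is short and has a bounded integrand. *)
Lemma contK_antider F : contK m K F -> contK m K (antider j r F).
Proof.
  intros HF p e He. set (b := pw p j r).
  assert (Hb0 := Rabs_pos b). assert (HF0 := Rabs_pos (F p)).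
  set (e1 := e / (2 * (Rabs b + 1))).
  destruct (setw_uniform F p (Rmin 0 b) (Rmax 0 b) e1 HF) as [d1 [Hd1 U]].
  { apply Rdiv_lt_0_compat; lra. }
  destruct (HF p 1 Rlt_0_1) as [d0 [Hd0 H0]].
  set (e2 := e / (2 * (Rabs (F p) + 1))).
  assert (He2 : 0 < e2) by (apply Rdiv_lt_0_compat; lra).
  exists (Rmin d1 (Rmin d0 e2)). split; [repeat apply Rmin_pos; auto|].
  intros q Hx Hw.
  assert (Hm1 := Rmin_l d1 (Rmin d0 e2)). assert (Hm2 := Rmin_r d1 (Rmin d0 e2)).
  assert (Hm3 := Rmin_l d0 e2). assert (Hm4 := Rmin_r d0 e2).
  assert (Hqb : Rabs (pw q j r - b) < Rmin d1 (Rmin d0 e2)) by (apply Hw; auto).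
  unfold antider. fold b.
  rewrite <- (RInt_Chasles (fun s => F (setw q j r s)) 0 b (pw q j r))
    by (apply ex_RInt_setw; auto).
  change (plus ?x ?y) with (x + y).
  assert (Hhead : Rabs (RInt (fun s => F (setw q j r s)) 0 b - RInt (fun s => F (setw p j r s)) 0 b)
               <= Rabs (b - 0) * e1).
  { rewrite <- (RInt_minus (V := R_CompleteNormedModule)) by (apply ex_RInt_setw; auto).
    apply (norm_RInt_le_const_abs (V := R_NormedModule) (fun s => F (setw q j r s) - F (setw p j r s))).
    - intros t Ht. apply Rlt_le, U; auto; [lra|].
      intros j' r' Hj' Hr'. specialize (Hw j' r' Hj' Hr'). lra.
    - apply (@RInt_correct R_CompleteNormedModule).
      apply (ex_RInt_minus (V := R_NormedModule)); apply ex_RInt_setw; auto. }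
  assert (Htail : Rabs (RInt (fun s => F (setw q j r s)) b (pw q j r))
               <= Rabs (pw q j r - b) * (Rabs (F p) + 1)).
  { apply (RInt_setw_tail_bound F p q d0 HF H0); [lra|].
    intros j' r' Hj' Hr'. specialize (Hw j' r' Hj' Hr'). lra. }
  assert (Hhead_small : Rabs (b - 0) * e1 < e / 2) by (rewrite Rminus_0_r; now apply frac_bound).
  assert (Htail_small : Rabs (pw q j r - b) * (Rabs (F p) + 1) < e / 2)
    by (apply lt_frac_bound; auto; fold e2; lra).
  match goal with |- Rabs (?A + ?B - ?C) < _ =>
    replace (A + B - C) with ((A - C) + B) by ring end.
  eapply Rle_lt_trans; [apply Rabs_triang|lra].
Qed.

Lemma pd_antider F p : OrderLE m K F -> pd (antider j r F) (CW j r) p = F p.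
Proof. intro HF. apply pd_unique, is_derive_antider, (OrderLE_contK m K F HF). Qed.

Lemma pd_antider_other F c p :
  c <> CW j r -> OrderLE m K F -> pd (antider j r F) c p = antider j r (pd F c) p.
Proof.
  intros Hc HF. apply pd_unique, is_derive_antider_other; auto.
  - exact (OrderLE_ex_pd m K F HF).
  - exact (OrderLE_contK m K _ (OrderLE_pd m K F c HF)).
  - exact (OrderLE_contK m K F HF).
Qed.

Lemma ex_pd_antider F : OrderLE m K F -> ex_pd (antider j r F).
Proof.
  intros HF c p. destruct (classic (c = CW j r)) as [->|Hc].
  - exists (F p). apply is_derive_antider, (OrderLE_contK m K F HF).
  - exists (antider j r (pd F c) p). apply is_derive_antider_other; auto.
    + exact (OrderLE_ex_pd m K F HF).
    + exact (OrderLE_contK m K _ (OrderLE_pd m K F c HF)).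
    + exact (OrderLE_contK m K F HF).
Qed.

End Antiderivative.

Lemma sumR_ext n f g : (forall i, (i < n)%nat -> f i = g i) -> sumR n f = sumR n g.
Proof. induction n; simpl; intros; auto. rewrite IHn, H; auto. Qed.

Lemma sumR_plus n f g : sumR n (fun i => f i + g i) = sumR n f + sumR n g.
Proof. induction n; simpl; [ring|]. rewrite IHn; ring. Qed.

Lemma sumR_scal n a f : sumR n (fun i => a * f i) = a * sumR n f.
Proof. induction n; simpl; [ring|]. rewrite IHn; ring. Qed.

Lemma sumR_eq0 n f : (forall i, (i < n)%nat -> f i = 0) -> sumR n f = 0.
Proof. induction n; simpl; intros; auto. rewrite IHn, H; auto. ring. Qed.

Lemma sumR_widen A B f : (A <= B)%nat -> (forall i, (A <= i < B)%nat -> f i = 0) ->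
  sumR B f = sumR A f.
Proof.
  intro H. induction H; intros; auto. simpl. rewrite IHle, H0; [ring|lia|].
  intros; apply H0; lia.
Qed.

Lemma sumR_delta n k X :
  sumR n (fun i => if Nat.eqb i k then X i else 0) = if Nat.ltb k n then X k else 0.
Proof.
  induction n; simpl; auto. rewrite IHn.
  destruct (Nat.eqb n k) eqn:E; [apply Nat.eqb_eq in E; subst|apply Nat.eqb_neq in E].
  - rewrite Nat.ltb_irrefl. replace (Nat.ltb k (S k)) with true
      by (symmetry; apply Nat.ltb_lt; lia). ring.
  - destruct (Nat.ltb k n) eqn:E2; [apply Nat.ltb_lt in E2|apply Nat.ltb_ge in E2].
    + replace (Nat.ltb k (S n)) with true by (symmetry; apply Nat.ltb_lt; lia). ring.
    + replace (Nat.ltb k (S n)) with false by (symmetry; apply Nat.ltb_ge; lia). ring.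
Qed.

Lemma ex_pd_sumR n (f : nat -> Pt -> R) :
  (forall i, (i < n)%nat -> ex_pd (f i)) -> ex_pd (fun q => sumR n (fun i => f i q)).
Proof.
  induction n; intros H; simpl; [apply ex_pd_const|].
  apply ex_pd_plus; auto.
Qed.

Lemma pd_sumR n (f : nat -> Pt -> R) c p : (forall i, (i < n)%nat -> ex_pd (f i)) ->
  pd (fun q => sumR n (fun i => f i q)) c p = sumR n (fun i => pd (f i) c p).
Proof.
  induction n; intros H; simpl; [now apply pd_eq0|].
  rewrite pd_plus, IHn; auto.
  - apply (ex_pd_sumR n f); auto.
  - apply H; lia.
Qed.

Section Closure.
Variables m K : nat.

(* The point of this class is that it is closed under partial derivatives
   (Closure_props), so its members have all iterated derivatives. *)
Inductive Closure : (Pt -> R) -> Prop :=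
| cl_order F : OrderLE m K F -> Closure F
| cl_const a : Closure (fun _ => a)
| cl_px : Closure px
| cl_pw j r : (j < m)%nat -> (r <= K)%nat -> Closure (fun p => pw p j r)
| cl_plus F G : Closure F -> Closure G -> Closure (fun p => F p + G p)
| cl_mult F G : Closure F -> Closure G -> Closure (fun p => F p * G p)
| cl_antider j r F : (j < m)%nat -> (r <= K)%nat -> OrderLE m K F -> Closure (antider j r F).

Lemma Closure_props F :
  Closure F -> local m K F /\ ex_pd F /\ contK m K F /\ forall c, Closure (pd F c).
Proof.
  induction 1 as [F HF| a | | j r Hj Hr | F G _ [L1 [D1 [C1 P1]]] _ [L2 [D2 [C2 P2]]]
                 | F G HF [L1 [D1 [C1 P1]]] HG [L2 [D2 [C2 P2]]] | j r F Hj Hr HF].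
  - split; [apply HF|]. split; [exact (OrderLE_ex_pd m K F HF)|].
    split; [exact (OrderLE_contK m K F HF)|]. intro c. now apply cl_order, OrderLE_pd.
  - repeat split; auto using local_const, ex_pd_const, contK_const.
    intro c. replace (pd (fun _ => a) c) with (fun _ : Pt => 0) by
      (extensionality p; now rewrite pd_eq0). apply cl_const.
  - repeat split; auto using local_px, ex_pd_px, contK_px.
    intro c. destruct (pd_px_const c) as [a ->]. apply cl_const.
  - repeat split; auto using local_pw, ex_pd_pw, contK_pw.
    intro c. destruct (pd_pw_const j r c) as [a ->]. apply cl_const.
  - repeat split; auto using local_plus, ex_pd_plus, contK_plus.
    intro c. replace (pd (fun p => F p + G p) c) with (fun p => pd F c p + pd G c p)
      by (extensionality p; rewrite pd_plus; [reflexivity|apply D1|apply D2]). now apply cl_plus.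
  - repeat split; auto using local_mult, ex_pd_mult, contK_mult.
    intro c. replace (pd (fun p => F p * G p) c) with (fun p => pd F c p * G p + F p * pd G c p)
      by (extensionality p; rewrite pd_mult; [reflexivity|apply D1|apply D2]). apply cl_plus; apply cl_mult; auto.
  - split; [exact (local_antider m K j r Hj Hr F (proj1 HF))|].
    split; [exact (ex_pd_antider m K j r F HF)|].
    split; [exact (contK_antider m K j r Hj Hr F (OrderLE_contK m K F HF))|].
    intro c. destruct (classic (c = CW j r)) as [->|Hc].
    + replace (pd (antider j r F) (CW j r)) with F
        by (extensionality p; symmetry; now apply (pd_antider m K)).
      now apply cl_order.
    + replace (pd (antider j r F) c) with (antider j r (pd F c))
        by (extensionality p; symmetry; now apply (pd_antider_other m K)).
      apply cl_antider; auto. now apply OrderLE_pd.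
Qed.

Lemma OrderLE_Closure F : Closure F -> OrderLE m K F.
Proof.
  intro H. split; [apply (Closure_props F H)|].
  intro cs. assert (Hc : Closure (ipd F cs)).
  { induction cs; simpl; auto. apply (Closure_props _ IHcs). }
  destruct (Closure_props _ Hc) as [_ [D [C _]]]. split; auto.
  intros c p. destruct (D c p) as [l Hl]. exists l. now apply is_derive_Reals.
Qed.

Lemma OrderLE_const a : OrderLE m K (fun _ => a).
Proof. apply OrderLE_Closure, cl_const. Qed.

Lemma OrderLE_pw j r : (j < m)%nat -> (r <= K)%nat -> OrderLE m K (fun p => pw p j r).
Proof. intros. now apply OrderLE_Closure, cl_pw. Qed.

Lemma OrderLE_plus F G : OrderLE m K F -> OrderLE m K G -> OrderLE m K (fun p => F p + G p).
Proof. intros. apply OrderLE_Closure, cl_plus; now apply cl_order. Qed.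

Lemma OrderLE_mult F G : OrderLE m K F -> OrderLE m K G -> OrderLE m K (fun p => F p * G p).
Proof. intros. apply OrderLE_Closure, cl_mult; now apply cl_order. Qed.

Lemma OrderLE_lin a b F G :
  OrderLE m K F -> OrderLE m K G -> OrderLE m K (fun p => a * F p + b * G p).
Proof. intros. apply OrderLE_plus; apply OrderLE_mult; auto using OrderLE_const. Qed.

Lemma OrderLE_antider j r F :
  (j < m)%nat -> (r <= K)%nat -> OrderLE m K F -> OrderLE m K (antider j r F).
Proof. intros. now apply OrderLE_Closure, cl_antider. Qed.

Lemma OrderLE_sumR n (f : nat -> Pt -> R) :
  (forall i, (i < n)%nat -> OrderLE m K (f i)) -> OrderLE m K (fun q => sumR n (fun i => f i q)).
Proof.
  induction n; intros H; simpl; [apply OrderLE_const|].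
  apply OrderLE_plus; auto.
Qed.

End Closure.

(** * Symmetry of second partial derivatives *)

Section Schwarz.
Variables m K : nat.

Lemma continuity_2d_shift G p a b :
  contK m K G -> continuity_2d_pt (fun u v => G (shift (shift p a v) b u)) 0 0.
Proof.
  intros HG [e He]. destruct (HG p e He) as [d [Hd H]].
  assert (Hd2 : 0 < d / 2) by lra. exists (mkposreal _ Hd2). intros u v Hu Hv.
  simpl in Hu, Hv. rewrite !shift0. rewrite Rminus_0_r in Hu, Hv.
  apply H; destruct a, b; simpl; intros; destruct_ifs;
    unfold Rabs in *; repeat destruct Rcase_abs; lra.
Qed.

Lemma pd_comm F c d p : OrderLE m K F -> pd (pd F c) d p = pd (pd F d) c p.
Proof.
  intro HO.
  assert (HD := OrderLE_ex_pd m K F HO).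
  assert (HDc := OrderLE_ex_pd m K _ (OrderLE_pd m K F c HO)).
  assert (HDd := OrderLE_ex_pd m K _ (OrderLE_pd m K F d HO)).
  assert (Cdc := OrderLE_contK m K _ (OrderLE_pd m K _ c (OrderLE_pd m K F d HO))).
  assert (Ccd := OrderLE_contK m K _ (OrderLE_pd m K _ d (OrderLE_pd m K F c HO))).
  set (f := fun u v => F (shift (shift p c u) d v)).
  assert (H1 : forall z v, Derive (fun t => f z t) v = pd F d (shift (shift p d v) c z)).
  { intros z v. unfold f. now rewrite Derive_shift, shiftC. }
  assert (H2 : forall u v, Derive (fun z => Derive (fun t => f z t) v) u
                           = pd (pd F d) c (shift (shift p d v) c u)).
  { intros u v. rewrite (Derive_ext _ (fun z => pd F d (shift (shift p d v) c z))) by auto.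
    now apply Derive_shift. }
  assert (H3 : forall u z, Derive (fun t => f t z) u = pd F c (shift (shift p c u) d z)).
  { intros u z. unfold f.
    rewrite (Derive_ext _ (fun t => F (shift (shift p d z) c t))) by (intro; now rewrite shiftC).
    now rewrite Derive_shift, shiftC. }
  assert (H4 : forall u v, Derive (fun z => Derive (fun t => f t z) u) v
                           = pd (pd F c) d (shift (shift p c u) d v)).
  { intros u v. rewrite (Derive_ext _ (fun z => pd F c (shift (shift p c u) d z))) by auto.
    now apply Derive_shift. }
  pose proof (Schwarz f 0 0) as S. rewrite H2, H4, !shift0 in S. symmetry. apply S.
  - exists (mkposreal 1 Rlt_0_1). intros u v _ _. repeat split.
    + exists (pd F c (shift (shift p d v) c u)). unfold f.
      apply (is_derive_ext (fun t => F (shift (shift p d v) c t))); [intro; now rewrite shiftC|].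
      now apply is_derive_shift.
    + exists (pd F d (shift (shift p c u) d v)). now apply is_derive_shift.
    + exists (pd (pd F d) c (shift (shift p d v) c u)).
      apply (is_derive_ext (fun z => pd F d (shift (shift p d v) c z))); [intros; now rewrite H1|].
      now apply is_derive_shift.
    + exists (pd (pd F c) d (shift (shift p c u) d v)).
      apply (is_derive_ext (fun z => pd F c (shift (shift p c u) d z))); [intros; now rewrite H3|].
      now apply is_derive_shift.
  - intro e. destruct (continuity_2d_shift _ p d c Cdc e) as [dl Hdl]. exists dl.
    intros u v Hu Hv. rewrite !H2, !shift0. rewrite !shift0 in Hdl. now apply Hdl.
  - intro e. destruct (continuity_2d_shift _ p c d Ccd e) as [dl Hdl]. exists dl.
    intros u v Hu Hv. rewrite !H4, !shift0. rewrite !shift0 in Hdl. now apply Hdl.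
Qed.

End Schwarz.

Lemma sumR_delta2 m n j r0 X : (j < m)%nat ->
  sumR m (fun j' => sumR n (fun r' =>
    (if (Nat.eqb j' j && Nat.eqb r' r0)%bool then 1 else 0) * X j' r')) =
  if Nat.ltb r0 n then X j r0 else 0.
Proof.
  intro Hj.
  rewrite (sumR_ext m _ (fun j' => if Nat.eqb j' j then (if Nat.ltb r0 n then X j' r0 else 0) else 0)).
  - rewrite sumR_delta. now replace (Nat.ltb j m) with true by (symmetry; apply Nat.ltb_lt; auto).
  - intros j' _. destruct (Nat.eqb j' j).
    + rewrite <- sumR_delta. apply sumR_ext. intros r' _. simpl. destruct (Nat.eqb r' r0); ring.
    + apply sumR_eq0. intros; simpl; ring.
Qed.

Lemma sumR_alt_telescope n (T : nat -> R) :
  sumR (S n) (fun r => (-1) ^ r * (T r + match r with O => 0 | S r0 => T r0 end)) =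
  (-1) ^ n * T n.
Proof.
  induction n; [simpl; ring|].
  change (sumR (S (S n)) ?f) with (sumR (S n) f + f (S n)). rewrite IHn. simpl. ring.
Qed.

(** * The total derivative and the Euler operator *)

Section TotalDerivative.
Variable m : nat.

Lemma ordOf_spec F : FiniteOrder m F -> OrderLE m (ordOf m F) F.
Proof. apply (epsilon_spec (inhabits 0%nat) (fun K => OrderLE m K F)). Qed.

Definition Dx_trunc M (G : Pt -> R) : Pt -> R := fun p =>
  pd G CX p + sumR m (fun j => sumR (S M) (fun r => pw p j (S r) * pd G (CW j r) p)).

Lemma Dx_trunc_widen A B G : OrderLE m A G -> (A <= B)%nat -> Dx_trunc B G = Dx_trunc A G.
Proof.
  intros HA HAB. extensionality p. unfold Dx_trunc. f_equal. apply sumR_ext. intros j Hj.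
  apply sumR_widen; [lia|]. intros r Hr. rewrite (pd_out m A G); [ring|apply HA|lia].
Qed.

(* [Dx m G] truncates its sum at the arbitrary bound [ordOf m G]; any order bound
   of [G] gives the same function. *)
Lemma Dx_eq_trunc M G : OrderLE m M G -> Dx m G = Dx_trunc M G.
Proof.
  intro HM. assert (H0 := ordOf_spec G (ex_intro _ M HM)).
  change (Dx m G) with (Dx_trunc (ordOf m G) G).
  destruct (Nat.le_ge_cases (ordOf m G) M); [symmetry|]; now apply Dx_trunc_widen.
Qed.

Lemma OrderLE_Dx M G : OrderLE m M G -> OrderLE m (S M) (Dx m G).
Proof.
  intro HG. rewrite (Dx_eq_trunc M) by auto.
  assert (HdG : forall c, OrderLE m (S M) (pd G c))
    by (intro; apply (OrderLE_mono m M); auto using OrderLE_pd).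
  apply OrderLE_plus; auto.
  apply (OrderLE_sumR m (S M) m (fun j q => sumR (S M) (fun r => pw q j (S r) * pd G (CW j r) q))).
  intros j Hj.
  apply (OrderLE_sumR m (S M) (S M) (fun r q => pw q j (S r) * pd G (CW j r) q)).
  intros r Hr. apply OrderLE_mult; auto. apply OrderLE_pw; lia.
Qed.

Lemma OrderLE_iter_Dx M G r : OrderLE m M G -> OrderLE m (M + r) (Nat.iter r (Dx m) G).
Proof.
  intro H. induction r; simpl; [now rewrite Nat.add_0_r|].
  rewrite Nat.add_succ_r. now apply OrderLE_Dx.
Qed.

Lemma Dx_const0 : Dx m (fun _ => 0) = (fun _ => 0).
Proof.
  rewrite (Dx_eq_trunc 0) by apply OrderLE_const. extensionality p. unfold Dx_trunc.
  rewrite pd_eq0 by auto. rewrite sumR_eq0; [ring|]. intros j _.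
  apply sumR_eq0. intros r _. rewrite pd_eq0 by auto. ring.
Qed.

Lemma iter_Dx_const0 r : Nat.iter r (Dx m) (fun _ => 0) = (fun _ => 0).
Proof. induction r; simpl; auto. rewrite IHr. apply Dx_const0. Qed.

Definition euler_trunc j M (F : Pt -> R) : Pt -> R := fun p =>
  sumR (S M) (fun r => (-1) ^ r * Nat.iter r (Dx m) (pd F (CW j r)) p).

Lemma euler_trunc_widen A B j F :
  OrderLE m A F -> (A <= B)%nat -> euler_trunc j B F = euler_trunc j A F.
Proof.
  intros HA HAB. extensionality p. unfold euler_trunc. apply sumR_widen; [lia|].
  intros r Hr. rewrite (pd_out_fun m A F) by (apply HA || lia). rewrite iter_Dx_const0. ring.
Qed.

Lemma euler_eq_trunc j M F : OrderLE m M F -> euler m j F = euler_trunc j M F.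
Proof.
  intro HM. assert (H0 := ordOf_spec F (ex_intro _ M HM)).
  change (euler m j F) with (euler_trunc j (ordOf m F) F).
  destruct (Nat.le_ge_cases (ordOf m F) M); [symmetry|]; now apply euler_trunc_widen.
Qed.

Lemma pd_lin a b F G c p :
  ex_pd F -> ex_pd G -> pd (fun q => a * F q + b * G q) c p = a * pd F c p + b * pd G c p.
Proof.
  intros HF HG. rewrite pd_plus, !pd_scal; auto.
  - exact (ex_pd_mult (fun _ => a) F (ex_pd_const a) HF c p).
  - exact (ex_pd_mult (fun _ => b) G (ex_pd_const b) HG c p).
Qed.

Lemma Dx_lin M a b F G : OrderLE m M F -> OrderLE m M G ->
  Dx m (fun p => a * F p + b * G p) = (fun p => a * Dx m F p + b * Dx m G p).
Proof.
  intros HF HG. assert (DF := OrderLE_ex_pd m M F HF). assert (DG := OrderLE_ex_pd m M G HG).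
  rewrite !(Dx_eq_trunc M) by auto using OrderLE_lin.
  extensionality p. unfold Dx_trunc. rewrite pd_lin by auto.
  enough (E : forall j, sumR (S M) (fun r => pw p j (S r) * pd (fun q => a * F q + b * G q) (CW j r) p)
    = a * sumR (S M) (fun r => pw p j (S r) * pd F (CW j r) p)
      + b * sumR (S M) (fun r => pw p j (S r) * pd G (CW j r) p)).
  { rewrite (sumR_ext _ _ _ (fun j _ => E j)), sumR_plus, !sumR_scal. ring. }
  intro j. rewrite <- !sumR_scal, <- sumR_plus. apply sumR_ext. intros r _.
  rewrite pd_lin by auto. ring.
Qed.

Lemma iter_Dx_lin M a b F G r : OrderLE m M F -> OrderLE m M G ->
  Nat.iter r (Dx m) (fun p => a * F p + b * G p) =
  (fun p => a * Nat.iter r (Dx m) F p + b * Nat.iter r (Dx m) G p).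
Proof.
  intros HF HG. induction r; simpl; auto.
  rewrite IHr. apply (Dx_lin (M + r)); now apply OrderLE_iter_Dx.
Qed.

Lemma euler_lin M j a b F G : OrderLE m M F -> OrderLE m M G ->
  euler m j (fun p => a * F p + b * G p) = (fun p => a * euler m j F p + b * euler m j G p).
Proof.
  intros HF HG. assert (DF := OrderLE_ex_pd m M F HF). assert (DG := OrderLE_ex_pd m M G HG).
  rewrite !(euler_eq_trunc j M) by auto using OrderLE_lin.
  extensionality p. unfold euler_trunc. rewrite <- !sumR_scal, <- sumR_plus.
  apply sumR_ext. intros r _.
  replace (pd (fun q => a * F q + b * G q) (CW j r))
    with (fun q => a * pd F (CW j r) q + b * pd G (CW j r) q)
    by (extensionality q; now rewrite pd_lin).
  rewrite (iter_Dx_lin M) by now apply OrderLE_pd. ring.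
Qed.

Lemma pd_Dx_trunc M B j r p : OrderLE m M B ->
  pd (Dx_trunc M B) (CW j r) p =
  Dx_trunc M (pd B (CW j r)) p +
  sumR m (fun j' => sumR (S M) (fun r' =>
    (if (Nat.eqb j' j && Nat.eqb (S r') r)%bool then 1 else 0) * pd B (CW j' r') p)).
Proof.
  intro HB. assert (DB := OrderLE_ex_pd m M B HB).
  assert (DBc : forall c, ex_pd (pd B c)) by (intro; apply (OrderLE_ex_pd m M), OrderLE_pd, HB).
  assert (Dterm : forall j' r', ex_pd (fun q => pw q j' (S r') * pd B (CW j' r') q))
    by (intros; apply ex_pd_mult; auto using ex_pd_pw).
  assert (Dinner : forall j', ex_pd (fun q => sumR (S M) (fun r' => pw q j' (S r') * pd B (CW j' r') q)))
    by (intro; now apply (ex_pd_sumR (S M) (fun r' q => pw q j' (S r') * pd B (CW j' r') q))).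
  assert (Hterm : forall j' r',
    pd (fun q => pw q j' (S r') * pd B (CW j' r') q) (CW j r) p =
    (if (Nat.eqb j' j && Nat.eqb (S r') r)%bool then 1 else 0) * pd B (CW j' r') p
    + pw p j' (S r') * pd (pd B (CW j r)) (CW j' r') p).
  { intros. rewrite pd_mult; [|apply ex_pd_pw|apply DBc].
    rewrite pd_pw, (pd_comm m M B (CW j' r') (CW j r)) by exact HB. ring. }
  unfold Dx_trunc. rewrite pd_plus; [|apply DBc|].
  2: now apply (ex_pd_sumR m (fun j' q => sumR (S M) (fun r' => pw q j' (S r') * pd B (CW j' r') q))).
  rewrite (pd_sumR m (fun j' q => sumR (S M) (fun r' => pw q j' (S r') * pd B (CW j' r') q))) by auto.
  rewrite (sumR_ext m _ (fun j' => sumR (S M) (fun r' =>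
      (if (Nat.eqb j' j && Nat.eqb (S r') r)%bool then 1 else 0) * pd B (CW j' r') p)
      + sumR (S M) (fun r' => pw p j' (S r') * pd (pd B (CW j r)) (CW j' r') p))).
  - rewrite sumR_plus, (pd_comm m M B CX (CW j r)) by auto. ring.
  - intros j' _. rewrite <- sumR_plus.
    rewrite (pd_sumR (S M) (fun r' q => pw q j' (S r') * pd B (CW j' r') q)) by auto.
    apply sumR_ext. intros r' _. apply Hterm.
Qed.

Lemma pd_Dx M B j r : OrderLE m M B -> (j < m)%nat ->
  pd (Dx m B) (CW j r) =
  (fun p => Dx m (pd B (CW j r)) p + match r with O => 0 | S r' => pd B (CW j r') p end).
Proof.
  intros HB Hj. extensionality p.
  rewrite (Dx_eq_trunc M B HB), (Dx_eq_trunc M (pd B (CW j r))) by now apply OrderLE_pd.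
  rewrite pd_Dx_trunc by auto. f_equal. destruct r as [|r0].
  - apply sumR_eq0. intros. apply sumR_eq0. intros. simpl. rewrite Bool.andb_false_r. ring.
  - simpl Nat.eqb. rewrite (sumR_delta2 m (S M) j r0 (fun j' r' => pd B (CW j' r') p)) by auto.
    destruct (Nat.ltb r0 (S M)) eqn:E; auto. apply Nat.ltb_ge in E.
    symmetry. apply (pd_out m M); [apply HB|lia].
Qed.

(* Total derivatives are null Lagrangians: the sum telescopes. *)
Lemma euler_Dx M B j : OrderLE m M B -> (j < m)%nat -> euler m j (Dx m B) = (fun _ => 0).
Proof.
  intros HB Hj. rewrite (euler_eq_trunc j (S M)) by now apply OrderLE_Dx.
  extensionality p. unfold euler_trunc.
  set (T := fun r => Nat.iter (S r) (Dx m) (pd B (CW j r)) p).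
  rewrite (sumR_ext _ _ (fun r => (-1) ^ r * (T r + match r with O => 0 | S r0 => T r0 end))).
  - rewrite sumR_alt_telescope. unfold T.
    rewrite (pd_out_fun m M B) by (apply HB || lia). rewrite iter_Dx_const0. ring.
  - intros r _. rewrite (pd_Dx M) by auto. f_equal. destruct r as [|r0]; [reflexivity|].
    replace (fun q => Dx m (pd B (CW j (S r0))) q + pd B (CW j r0) q) with
      (fun q => 1 * Dx m (pd B (CW j (S r0))) q + 1 * pd B (CW j r0) q)
      by (extensionality q; ring).
    rewrite (iter_Dx_lin (S M)).
    + unfold T. rewrite <- Nat.iter_succ_r. ring.
    + apply OrderLE_Dx, OrderLE_pd, HB.
    + apply (OrderLE_mono m M); auto using OrderLE_pd.
Qed.

Lemma pd_iter_Dx_top M G r k : OrderLE m M G -> (k < m)%nat ->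
  pd (Nat.iter r (Dx m) G) (CW k (M + r)) = pd G (CW k M).
Proof.
  intros HG Hk. induction r; [now rewrite Nat.add_0_r|].
  simpl Nat.iter. rewrite (pd_Dx (M + r)) by auto using OrderLE_iter_Dx.
  rewrite Nat.add_succ_r, (pd_out_fun m (M + r)) by first [lia | apply OrderLE_iter_Dx; auto].
  rewrite Dx_const0, IHr. extensionality p. ring.
Qed.

Lemma pd_euler_trunc n j c p F : (forall r, ex_pd (Nat.iter r (Dx m) (pd F (CW j r)))) ->
  pd (euler_trunc j n F) c p =
  sumR (S n) (fun r => (-1) ^ r * pd (Nat.iter r (Dx m) (pd F (CW j r))) c p).
Proof.
  intro HD. unfold euler_trunc.
  rewrite (pd_sumR (S n) (fun r q => (-1) ^ r * Nat.iter r (Dx m) (pd F (CW j r)) q)).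
  - apply sumR_ext. intros. apply pd_scal, HD.
  - intros. apply ex_pd_mult; auto using ex_pd_const.
Qed.

(* Only the term r = M of e^j[f] reaches the jet variables of order 2M. *)
Lemma pd_euler_top M f j k p : OrderLE m M f -> (j < m)%nat -> (k < m)%nat ->
  pd (euler m j f) (CW k (M + M)) p = (-1) ^ M * pd (pd f (CW j M)) (CW k M) p.
Proof.
  intros Hf Hj Hk. rewrite (euler_eq_trunc j M) by auto. rewrite pd_euler_trunc.
  2: { intro r. apply (OrderLE_ex_pd m (M + r)), OrderLE_iter_Dx, OrderLE_pd, Hf. }
  simpl sumR. rewrite sumR_eq0.
  - rewrite pd_iter_Dx_top; auto using OrderLE_pd. ring.
  - intros r Hr. rewrite (pd_out m (M + r)); [ring| |lia].
    apply OrderLE_iter_Dx, OrderLE_pd, Hf.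
Qed.

(* Once the terms of order 2N+2 are gone, the variables of order 2N+1 are reached by
   the two top terms r = N and r = N + 1. *)
Lemma pd_euler_subtop N f j k p : OrderLE m (S N) f ->
  (forall i, (i < m)%nat -> OrderLE m N (pd f (CW i (S N)))) ->
  (j < m)%nat -> (k < m)%nat ->
  pd (euler m j f) (CW k (S N + N)) p =
  (-1) ^ (S N) * (pd (pd f (CW j (S N))) (CW k N) p - pd (pd f (CW k (S N))) (CW j N) p).
Proof.
  intros Hf HN Hj Hk. rewrite (euler_eq_trunc j (S N)) by auto. rewrite pd_euler_trunc.
  2: { intro r. apply (OrderLE_ex_pd m (S N + r)), OrderLE_iter_Dx, OrderLE_pd, Hf. }
  cbn [sumR]. rewrite sumR_eq0.
  - rewrite (pd_iter_Dx_top (S N) _ N k) by auto using OrderLE_pd.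
    rewrite Nat.add_comm, (pd_iter_Dx_top N) by auto.
    rewrite (pd_comm m (S N) f (CW j N) (CW k (S N))) by auto. simpl. ring.
  - intros r Hr. rewrite (pd_out m (S N + r)); [ring| |lia].
    apply OrderLE_iter_Dx, OrderLE_pd, Hf.
Qed.

End TotalDerivative.

(** * Lowering the order *)

Section Reduction.
Variable m : nat.

Definition replace_top (p q : Pt) M n : Pt :=
  mkPt (px p) (fun j r => if (Nat.eqb r (S M) && Nat.ltb j n)%bool then pw q j r else pw p j r).

(* Move from p to q one top variable w^n_{M+1} at a time; F is constant along each move. *)
Lemma OrderLE_of_pd_top0 M F : OrderLE m (S M) F ->
  (forall k p, (k < m)%nat -> pd F (CW k (S M)) p = 0) -> OrderLE m M F.
Proof.
  intros HF H0. apply (OrderLE_lower m M (S M)); auto.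
  assert (HL := proj1 HF). assert (HD := OrderLE_ex_pd m (S M) F HF).
  intros p q Hx Hw.
  assert (Hmove : forall n, (n <= m)%nat -> F (replace_top p q M n) = F p).
  { induction n; intros Hn.
    - f_equal. apply Pt_ext; simpl; auto. intros. now rewrite Bool.andb_false_r.
    - rewrite <- IHn by lia.
      rewrite <- (shift_const_of_pd0 F (CW n (S M)) (replace_top p q M n) HD
        (fun u => H0 n _ ltac:(lia)) (pw q n (S M) - pw p n (S M))).
      apply HL; simpl; auto. intros j r Hj Hr.
      destruct (Nat.eqb r (S M)) eqn:E1, (Nat.eqb j n) eqn:E2; simpl; auto.
      + apply Nat.eqb_eq in E1, E2; subst. rewrite Nat.ltb_irrefl.
        replace (Nat.ltb n (S n)) with true by (symmetry; apply Nat.ltb_lt; lia). ring.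
      + apply Nat.eqb_neq in E2.
        destruct (Nat.ltb j (S n)) eqn:E3, (Nat.ltb j n) eqn:E4; auto;
          [apply Nat.ltb_lt in E3; apply Nat.ltb_ge in E4
          |apply Nat.ltb_ge in E3; apply Nat.ltb_lt in E4]; lia. }
  rewrite <- (Hmove m (le_n m)). apply HL; simpl; auto. intros j r Hj Hr.
  destruct (Nat.eqb r (S M)) eqn:E1; simpl.
  - now replace (Nat.ltb j m) with true by (symmetry; apply Nat.ltb_lt; lia).
  - apply Nat.eqb_neq in E1. apply Hw; auto; lia.
Qed.

Definition closed_top M (b : nat -> Pt -> R) : Prop :=
  forall j k p, (j < m)%nat -> (k < m)%nat -> pd (b j) (CW k M) p = pd (b k) (CW j M) p.

(* With B1 the antiderivative of b_n in w^n_M, replacing each b_k by b_k - dB1/dw^k_M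
   kills b_n and, by closedness, keeps b_k = 0 for k > n. *)
Lemma exists_potential_top_upto M n (b : nat -> Pt -> R) : (n <= m)%nat ->
  (forall k, (k < m)%nat -> OrderLE m M (b k)) -> closed_top M b ->
  (forall k p, (n <= k < m)%nat -> b k p = 0) ->
  exists B, OrderLE m M B /\ forall k p, (k < m)%nat -> pd B (CW k M) p = b k p.
Proof.
  revert b. induction n; intros b Hn Hb Hc Hz.
  - exists (fun _ => 0). split; [apply OrderLE_const|].
    intros k p Hk. rewrite pd_eq0 by auto. rewrite Hz; auto; lia.
  - set (B1 := antider n M (b n)).
    assert (HB1 : OrderLE m M B1) by (apply OrderLE_antider; auto; lia).
    assert (DB1 : forall c, ex_pd (pd B1 c)) by (intro; apply (OrderLE_ex_pd m M), OrderLE_pd, HB1).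
    assert (Db : forall k, (k < m)%nat -> ex_pd (b k)) by (intros; now apply (OrderLE_ex_pd m M), Hb).
    assert (HB1n : forall p, pd B1 (CW n M) p = b n p) by (intro; apply (pd_antider m M), Hb; lia).
    assert (HB1k : forall k p, (n < k < m)%nat -> pd B1 (CW k M) p = 0).
    { intros k p Hk. unfold B1. rewrite (pd_antider_other m M); [|injection 1; lia|apply Hb; lia].
      apply antider_eq0. intro q. rewrite Hc by lia. apply pd_eq0. intro. rewrite !Hz; auto; lia. }
    destruct (IHn (fun k p => 1 * b k p + -1 * pd B1 (CW k M) p)) as [B2 [HB2 HB2']].
    + lia.
    + intros k Hk. apply OrderLE_lin; auto using OrderLE_pd.
    + intros j k p Hj Hk. cbn beta.
      rewrite !pd_lin by auto. rewrite (Hc j k p), (pd_comm m M B1 (CW j M) (CW k M)); auto.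
    + intros k p Hk. destruct (Nat.eq_dec k n) as [->|Hkn].
      * rewrite HB1n. ring.
      * rewrite Hz, HB1k by lia. ring.
    + exists (fun p => 1 * B1 p + 1 * B2 p). split; [now apply OrderLE_lin|].
      intros k p Hk. rewrite pd_lin by (apply (OrderLE_ex_pd m M); auto). rewrite HB2' by auto. ring.
Qed.

Lemma exists_potential_top M (b : nat -> Pt -> R) :
  (forall k, (k < m)%nat -> OrderLE m M (b k)) -> closed_top M b ->
  exists B, OrderLE m M B /\ forall k p, (k < m)%nat -> pd B (CW k M) p = b k p.
Proof. intros. apply (exists_potential_top_upto M m); auto. intros; lia. Qed.

Lemma OrderLE_pd_top N f T : OrderLE m (S N) f ->
  (forall j, (j < m)%nat -> OrderLE m T (euler m j f)) -> (T < S N + S N)%nat ->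
  forall i, (i < m)%nat -> OrderLE m N (pd f (CW i (S N))).
Proof.
  intros Hf HE HT i Hi. apply OrderLE_of_pd_top0; [now apply OrderLE_pd|].
  intros k p Hk. pose proof (pd_euler_top m (S N) f i k p Hf Hi Hk) as Htop.
  rewrite (pd_out m T) in Htop by first [lia | apply HE; auto].
  destruct (Rmult_integral _ _ (eq_sym Htop)) as [E|E]; auto.
  exfalso. exact (pow_nonzero (-1) (S N) ltac:(lra) E).
Qed.

Lemma closed_top_pd_top N f T : OrderLE m (S N) f ->
  (forall j, (j < m)%nat -> OrderLE m T (euler m j f)) -> (T <= N + N)%nat ->
  closed_top N (fun k => pd f (CW k (S N))).
Proof.
  intros Hf HE HT j k p Hj Hk.
  assert (Hb := OrderLE_pd_top N f T Hf HE ltac:(lia)).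
  pose proof (pd_euler_subtop m N f j k p Hf Hb Hj Hk) as Hsub.
  rewrite (pd_out m T) in Hsub by first [lia | apply HE; auto].
  destruct (Rmult_integral _ _ (eq_sym Hsub)) as [E|E]; [|lra].
  exfalso. exact (pow_nonzero (-1) (S N) ltac:(lra) E).
Qed.

(* With B a potential of the d f / d w^k_{N+1} in the variables
   w_N, f - D_x B has the same Euler-Lagrange expressions and order N. *)
Lemma reduce_order_step N T f : (T <= N)%nat -> OrderLE m (S N) f ->
  (forall j, (j < m)%nat -> OrderLE m (T + T) (euler m j f)) ->
  exists g, OrderLE m N g /\ forall j, (j < m)%nat -> euler m j g = euler m j f.
Proof.
  intros HTN Hf HE.
  destruct (exists_potential_top N (fun k => pd f (CW k (S N)))) as [B [HB HB']].
  - apply (OrderLE_pd_top N f (T + T)); auto; lia.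
  - apply (closed_top_pd_top N f (T + T)); auto; lia.
  - assert (HDB : OrderLE m (S N) (Dx m B)) by now apply OrderLE_Dx.
    exists (fun p => 1 * f p + -1 * Dx m B p). split.
    + apply OrderLE_of_pd_top0; [now apply OrderLE_lin|].
      intros k p Hk.
      rewrite pd_lin by (apply (OrderLE_ex_pd m (S N)); auto).
      rewrite (pd_Dx m N B k (S N)), (pd_out_fun m N B k (S N)) by (apply HB || auto).
      rewrite Dx_const0, HB' by auto. ring.
    + intros j Hj. rewrite (euler_lin m (S N)), (euler_Dx m N) by auto.
      extensionality p. ring.
Qed.

Lemma reduce_order T n f : OrderLE m (T + n) f ->
  (forall j, (j < m)%nat -> OrderLE m (T + T) (euler m j f)) ->
  exists g, OrderLE m T g /\ forall j, (j < m)%nat -> euler m j g = euler m j f.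
Proof.
  revert f. induction n; intros f Hf HE.
  - exists f. rewrite Nat.add_0_r in Hf. auto.
  - rewrite Nat.add_succ_r in Hf.
    destruct (reduce_order_step (T + n) T f) as [f' [Hf' Hf'E]]; auto; [lia|].
    destruct (IHn f') as [g [Hg HgE]]; auto.
    + intros j Hj. rewrite Hf'E; auto.
    + exists g. split; auto. intros j Hj. now rewrite HgE, Hf'E.
Qed.

Lemma OrderLE_sub_affine_top K g : OrderLE m (S K) g ->
  (forall k, (k < m)%nat -> OrderLE m K (pd g (CW k (S K)))) ->
  OrderLE m K (fun q => g q - sumR m (fun k => pd g (CW k (S K)) q * pw q k (S K))).
Proof.
  intros Hg Hb.
  set (s := fun q => sumR m (fun k => pd g (CW k (S K)) q * pw q k (S K))).
  assert (Hs : OrderLE m (S K) s).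
  { apply (OrderLE_sumR m (S K) m (fun k q => pd g (CW k (S K)) q * pw q k (S K))).
    intros k Hk. apply OrderLE_mult; [apply (OrderLE_mono m K); auto|apply OrderLE_pw; auto]. }
  assert (Ds : forall k, (k < m)%nat -> ex_pd (fun q => pd g (CW k (S K)) q * pw q k (S K)))
    by (intros; apply ex_pd_mult; [apply (OrderLE_ex_pd m K); auto|apply ex_pd_pw]).
  change (OrderLE m K (fun q => g q - s q)).
  replace (fun q => g q - s q) with (fun q => 1 * g q + -1 * s q) by (extensionality q; ring).
  apply OrderLE_of_pd_top0; [now apply OrderLE_lin|].
  intros i p Hi. rewrite pd_lin by (apply (OrderLE_ex_pd m (S K)); auto).
  unfold s. rewrite (pd_sumR m (fun k q => pd g (CW k (S K)) q * pw q k (S K))) by auto.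
  rewrite (sumR_ext m _ (fun k => if Nat.eqb k i then pd g (CW k (S K)) p else 0)).
  - rewrite sumR_delta. replace (Nat.ltb i m) with true by (symmetry; apply Nat.ltb_lt; auto). ring.
  - intros k Hk. rewrite pd_mult; [|apply (OrderLE_ex_pd m K); auto|apply ex_pd_pw].
    rewrite pd_pw, (pd_out m K (pd g (CW k (S K))))
      by first [lia | exact (proj1 (Hb k Hk))].
    rewrite Nat.eqb_refl, Bool.andb_true_r. destruct (Nat.eqb k i); ring.
Qed.

End Reduction.

Theorem mainTheorem9 (m : nat) (f : Pt -> R) (S : nat) :
  FiniteOrder m f ->
  (forall j, (j < m)%nat -> OrderLE m S (euler m j f)) ->
  (forall K, S = (2 * K)%nat ->
     exists g : Pt -> R, OrderLE m K g /\
       forall j p, (j < m)%nat -> euler m j g p = euler m j f p) /\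
  (forall K, S = (2 * K + 1)%nat ->
     exists (g0 : Pt -> R) (g : nat -> Pt -> R),
       OrderLE m K g0 /\ (forall k, (k < m)%nat -> OrderLE m K (g k)) /\
       forall j p, (j < m)%nat ->
         euler m j f p =
         euler m j (fun q => g0 q + sumR m (fun k => g k q * pw q k (K + 1)%nat)) p).
Proof.
  intros [N Hf] HE. split.
  - intros K ->.
    destruct (reduce_order m K N f) as [g [Hg HgE]].
    + apply (OrderLE_mono m N); auto; lia.
    + intros j Hj. replace (K + K)%nat with (2 * K)%nat by lia. auto.
    + exists g. split; auto. intros j p Hj. now rewrite HgE.
  - intros K ->.
    destruct (reduce_order m (Datatypes.S K) N f) as [g [Hg HgE]].
    + apply (OrderLE_mono m N); auto; lia.
    + intros j Hj. apply (OrderLE_mono m (2 * K + 1)); auto; lia.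
    + assert (Hb : forall k, (k < m)%nat -> OrderLE m K (pd g (CW k (Datatypes.S K)))).
      { apply (OrderLE_pd_top m K g (2 * K + 1)); auto; [|lia].
        intros j Hj. rewrite HgE; auto. }
      exists (fun q => g q - sumR m (fun k => pd g (CW k (Datatypes.S K)) q * pw q k (Datatypes.S K))),
        (fun k => pd g (CW k (Datatypes.S K))).
      split; [now apply OrderLE_sub_affine_top|]. split; auto.
      intros j p Hj. rewrite Nat.add_1_r, <- HgE by auto. f_equal.
      extensionality q. ring.
Qed.
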